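(* For $j=1,2$ let $K_j=\mathbb Q(u_j)$ be a totally real quartic number field, $p_j\in\mathbb Q[t]$ the minimal polynomial of $u_j$, $\mathcal O_{K_j}$ its ring of integers, and $\beta_j$ a $\mathbb Z$-basis of $\mathcal O_{K_j}$ (identifying $\mathcal O_{K_j}$ with $\mathbb Z^4$ and $K_j$ with $\mathbb Q^4$). For $x\in K_j$ let $m_j(x)\in \mathrm{GL}_4(\mathbb Q)$ (for $x\neq0$) be the matrix of multiplication by $x$ in the basis $\beta_j$, let $\tilde T_j:=\mathrm{span}_{\mathbb R}\{m_j(1),m_j(u_j),m_j(u_j^2),m_j(u_j^3)\}\cap\mathrm{GL}_4(\mathbb R)$ (an $\mathbb R$-split torus) and $T_j$ its identity component. Choose three multiplicatively independent units of $\mathcal O_{K_j}$ with multiplication matrices $A^{(j)}_1,A^{(j)}_2,A^{(j)}_3\in\mathrm{GL}_4(\mathbb Z)\cap\tilde T_j$, let $\Lambda_j$ be the intersection with $T_j$ of the group they generate, and let $\Gamma_j:=\Lambda_j\ltimes\mathbb Z^4\subset G_{T_j}:=T_j\ltimes\mathbb R^4$. If $\Gamma_1$ and $\Gamma_2$ are commensurable, i.e. there exist finite index subgroups $\Gamma_1'\subset\Gamma_1$, $\Gamma_2'\subset\Gamma_2$ and a Lie group isomorphism $\Phi:G_{T_1}\to G_{T_2}$ with $\Phi(\Gamma_1')=\Gamma_2'$, then the splitting fields of $p_1$ and $p_2$ over $\mathbb Q$ are isomorphic.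
   Context: $G_{T_j}=T_j\ltimes\mathbb R^4$ is the semidirect product with $T_j$ acting linearly on $\mathbb R^4$; each $G_{T_j}$ is isomorphic to $\exp(\mathfrak a)\ltimes\mathbb R^4$ with $\mathfrak a$ the traceless diagonal $4\times4$ matrices, and $\Gamma_j$ is a lattice in $G_{T_j}$. *)

From HB Require Import structures.
From mathcomp Require Import all_boot all_order all_algebra all_field.
From mathcomp Require Import all_classical all_reals all_analysis.
Unset Printing Implicit Defensive.
Import Order.TTheory GRing.Theory Num.Theory.
Import numFieldTopology.Exports numFieldNormedType.Exports.
Local Open Scope classical_set_scope.
Local Open Scope ring_scope.

Definition pevalC (q : {poly rat}) (x : algC) : algC := (map_poly ratr q).[x].

(* p is the minimal polynomial of u over Q, Q(u) is quartic and totally real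
   (all conjugates of u, i.e. all complex roots of p, are real) *)
Definition totally_real_quartic_minpoly (p : {poly rat}) (u : algC) : Prop :=
  [/\ p \is monic, irreducible_poly p, size p = 5%N, root (map_poly ratr p) u
    & forall z : algC, root (map_poly ratr p) z -> z \is Num.real].

Definition in_Qu (u x : algC) : Prop := exists q : {poly rat}, x = pevalC q u.

Definition integralC (x : algC) : Prop :=
  exists q : {poly int}, q \is monic /\ (map_poly (fun z : int => z%:~R) q).[x] = 0.

Definition in_OK (u x : algC) : Prop := in_Qu u x /\ integralC x.

Definition is_Zbasis (u : algC) (b : 'I_4 -> algC) : Prop :=
  [/\ (forall i, in_OK u (b i)),
      (forall x, in_OK u x -> exists c : 'I_4 -> int, x = \sum_i (c i)%:~R * b i)
    & forall c : 'I_4 -> int, \sum_i (c i)%:~R * b i = 0 -> forall i, c i = 0].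

(* M is the matrix of multiplication by x in the basis b (acting on column
   coordinate vectors):  x * b_i = sum_k M k i * b_k *)
Definition is_mult_matrix (b : 'I_4 -> algC) (x : algC) (M : 'M[rat]_4) : Prop :=
  forall i, x * b i = \sum_k ratr (M k i) * b k.

Definition is_unit_OK (u e : algC) : Prop := [/\ in_OK u e, e != 0 & in_OK u e^-1].

Definition mult_indep (e : 'I_3 -> algC) : Prop :=
  forall a : 'I_3 -> int, \prod_i (e i) ^ (a i) = 1 -> forall i, a i = 0.

Definition field_data (p : {poly rat}) (u : algC) (b : 'I_4 -> algC)
  (M : 'I_4 -> 'M[rat]_4) (e : 'I_3 -> algC) (A : 'I_3 -> 'M[rat]_4) : Prop :=
  [/\ totally_real_quartic_minpoly p u /\ is_Zbasis u b,
      (forall k : 'I_4, is_mult_matrix b (u ^+ k) (M k)),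
      (forall i, is_unit_OK u (e i)), mult_indep e
    & forall i, is_mult_matrix b (e i) (A i)].

Definition subfieldC (F : set algC) : Prop :=
  [/\ F 1, (forall x y, F x -> F y -> F (x - y)),
      (forall x y, F x -> F y -> F (x * y)) & (forall x, F x -> F x^-1)].

Definition splitting_fieldC (p : {poly rat}) : set algC :=
  [set x | forall F, subfieldC F ->
     (forall z, root (map_poly ratr p) z -> F z) -> F x].

Definition fields_isomorphic (F1 F2 : set algC) : Prop :=
  exists f : algC -> algC,
    [/\ (forall x, F1 x -> F2 (f x)),
        (forall y, F2 y -> exists2 x, F1 x & f x = y),
        (forall x y, F1 x -> F1 y -> f x = f y -> x = y) /\
        (forall x y, F1 x -> F1 y -> f (x + y) = f x + f y),
        (forall x y, F1 x -> F1 y -> f (x * y) = f x * f y)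
      & f 1 = 1].

Definition mxR (R : realType) (M : 'M[rat]_4) : 'M[R]_4 := map_mx ratr M.

Definition Ttilde (R : realType) (M : 'I_4 -> 'M[rat]_4) : set 'M[R]_4 :=
  [set X | (exists c : 'I_4 -> R, X = \sum_k c k *: mxR R (M k)) /\ X \in unitmx].

Definition Tid (R : realType) (M : 'I_4 -> 'M[rat]_4) : set 'M[R]_4 :=
  connected_component (Ttilde R M) 1%:M.

Definition subgroupGL (R : realType) (H : set 'M[R]_4) : Prop :=
  [/\ (forall X, H X -> X \in unitmx), H 1%:M,
      (forall X Y, H X -> H Y -> H (X *m Y)) & (forall X, H X -> H (invmx X))].

Definition gen_group (R : realType) (S : set 'M[R]_4) : set 'M[R]_4 :=
  [set X | forall H : set 'M[R]_4, subgroupGL R H -> S `<=` H -> H X].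

Definition Lambda (R : realType) (M : 'I_4 -> 'M[rat]_4) (A : 'I_3 -> 'M[rat]_4)
  : set 'M[R]_4 :=
  Tid R M `&` gen_group R (range (fun i => mxR R (A i))).

Definition sdp (R : realType) := ('M[R]_4 * 'cV[R]_4)%type.
Definition sdmul (R : realType) (g h : sdp R) : sdp R := (g.1 *m h.1, g.2 + g.1 *m h.2).
Definition sdone (R : realType) : sdp R := (1%:M, 0).
Definition sdinv (R : realType) (g : sdp R) : sdp R := (invmx g.1, - (invmx g.1 *m g.2)).

Definition GT (R : realType) (M : 'I_4 -> 'M[rat]_4) : set (sdp R) :=
  [set g | Tid R M g.1].

Definition int_vec (R : realType) (v : 'cV[R]_4) : Prop :=
  forall i, exists z : int, v i 0 = z%:~R.

Definition Gamma (R : realType) (M : 'I_4 -> 'M[rat]_4) (A : 'I_3 -> 'M[rat]_4)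
  : set (sdp R) :=
  [set g | Lambda R M A g.1 /\ int_vec R g.2].

Definition is_subgroup (R : realType) (G H : set (sdp R)) : Prop :=
  [/\ H `<=` G, H (sdone R), (forall g h, H g -> H h -> H (sdmul R g h))
    & (forall g, H g -> H (sdinv R g))].

Definition finite_index (R : realType) (G H : set (sdp R)) : Prop :=
  exists (n : nat) (x : 'I_n -> sdp R), (forall i, G (x i)) /\
    forall g, G g -> exists i, exists2 h, H h & g = sdmul R (x i) h.

(* Lie group isomorphism G1 -> G2: a homeomorphic group isomorphism
   (continuous homomorphisms of Lie groups are automatically smooth) *)
Definition lie_group_iso (R : realType) (G1 G2 : set (sdp R)) (Phi : sdp R -> sdp R)
  : Prop :=
  [/\ (forall g, G1 g -> G2 (Phi g)),
      (forall g h, G1 g -> G1 h -> Phi (sdmul R g h) = sdmul R (Phi g) (Phi h)),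
      {within G1, continuous Phi}
    & exists Psi : sdp R -> sdp R,
        [/\ (forall g, G2 g -> G1 (Psi g)),
            (forall g, G1 g -> Psi (Phi g) = g),
            (forall g, G2 g -> Phi (Psi g) = g)
          & {within G2, continuous Psi}]].

Definition commensurable (R : realType) (G1 Gam1 G2 Gam2 : set (sdp R)) : Prop :=
  exists (Gam1' Gam2' : set (sdp R)) (Phi : sdp R -> sdp R),
    [/\ is_subgroup R Gam1 Gam1' /\ finite_index R Gam1 Gam1',
        is_subgroup R Gam2 Gam2', finite_index R Gam2 Gam2',
        lie_group_iso R G1 G2 Phi
      & Phi @` Gam1' = Gam2'].

From HB Require Import structures.
From mathcomp Require Import all_boot all_order all_algebra all_field.
From mathcomp Require Import all_classical all_reals all_analysis.
Import Order.TTheory GRing.Theory Num.Theory.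
Import numFieldTopology.Exports numFieldNormedType.Exports.
Local Open Scope classical_set_scope.
Local Open Scope ring_scope.

Set Implicit Arguments.
Unset Strict Implicit.
Unset Printing Implicit Defensive.

(* A Lie group isomorphism Phi : T1 |x R^4 -> T2 |x R^4 preserves the
   translation subgroup R^4, since translations are commutators with positive
   scalars and T2 is abelian; on it Phi restricts to an additive injective map L
   with L (t v) = Phi(t) L v. As Phi maps a finite index subgroup of Gamma1,
   which contains Z^4, into Gamma2, L sends a nonzero multiple of every integer
   vector to an integer vector, so L is an invertible rational matrix P on Q^4.
   Then P conjugates m1(x1), x1 = 1 + s0 u1 in K1, to a matrix in T2 with
   rational entries, i.e. to m2(x2) for some x2 in K2; conjugate multiplication
   matrices force x1 and x2 to have the same minimal polynomial. This produces
   a root of p1 in K2 = Q(u2), which generates K2 by counting degrees, so the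
   splitting fields of p1 and p2 in algC coincide. *)

Definition rat_free {n} (b : 'I_n -> algC) : Prop :=
  forall c : 'I_n -> rat, \sum_i ratr (c i) * b i = 0 -> forall i, c i = 0.

Lemma int_free_rat_free n (b : 'I_n -> algC) :
  (forall c : 'I_n -> int, \sum_i (c i)%:~R * b i = 0 -> forall i, c i = 0) ->
  rat_free b.
Proof.
move=> b_free c c_b0 i.
pose D : int := \prod_j denq (c j).
have D_neq0 : D != 0 by rewrite prodf_seq_neq0; apply/allP => j _; exact: denq_neq0.
pose z j : int := numq (c j) * \prod_(k | k != j) denq (c k).
have zE j : (z j)%:~R = c j * D%:~R :> rat.
  rewrite /z /D [in RHS](bigD1 j) //= intrM numqE intrM mulrA.
  by congr (_ * (_%:~R)); exact: eq_bigl.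
have z_b : \sum_i (z i)%:~R * b i = D%:~R * \sum_i ratr (c i) * b i.
  rewrite mulr_sumr; apply: eq_bigr => k _; rewrite mulrA; congr (_ * _).
  by rewrite -(rmorph_int (ratr : {rmorphism rat -> algC})) zE rmorphM rmorph_int mulrC.
have /eqP : (z i)%:~R = 0 :> rat by rewrite (b_free z _ i) // z_b c_b0 mulr0.
by rewrite zE mulf_eq0 intr_eq0 (negbTE D_neq0) orbF => /eqP.
Qed.

Lemma Zbasis_rat_free u b : is_Zbasis u b -> rat_free b.
Proof. by case=> _ _; exact: int_free_rat_free. Qed.

Section MultMatrix.
Variable b : 'I_4 -> algC.

Lemma mult_matrix0 : is_mult_matrix b 0 0.
Proof. by move=> i; rewrite mul0r big1 // => k _; rewrite mxE rmorph0 mul0r. Qed.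

Lemma mult_matrix_scalar q : is_mult_matrix b (ratr q) q%:M.
Proof.
move=> i; rewrite (bigD1 i) //= big1 ?addr0 ?mxE ?eqxx ?mulr1n //.
by move=> j ji; rewrite mxE (negbTE ji) mulr0n rmorph0 mul0r.
Qed.

Lemma mult_matrix1 : is_mult_matrix b 1 1%:M.
Proof. by rewrite -(rmorph1 (ratr : {rmorphism rat -> algC})); exact: mult_matrix_scalar. Qed.

Lemma mult_matrixD x y X Y : is_mult_matrix b x X -> is_mult_matrix b y Y ->
  is_mult_matrix b (x + y) (X + Y).
Proof.
move=> HX HY i; rewrite mulrDl HX HY -big_split /=; apply: eq_bigr => k _.
by rewrite mxE rmorphD mulrDl.
Qed.

Lemma mult_matrixZ q x X : is_mult_matrix b x X ->
  is_mult_matrix b (ratr q * x) (q *: X).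
Proof.
move=> HX i; rewrite -mulrA HX mulr_sumr; apply: eq_bigr => k _.
by rewrite mxE rmorphM mulrA.
Qed.

Lemma mult_matrixM x y X Y : is_mult_matrix b x X -> is_mult_matrix b y Y ->
  is_mult_matrix b (x * y) (X *m Y).
Proof.
move=> HX HY i; rewrite -mulrA HY mulr_sumr.
under eq_bigr => l _ do rewrite mulrCA HX mulr_sumr.
rewrite exchange_big /=; apply: eq_bigr => k _.
rewrite mxE rmorph_sum mulr_suml; apply: eq_bigr => l _.
by rewrite rmorphM mulrA [ratr (Y l i) * _]mulrC.
Qed.

Lemma mult_matrix_sum (I : finType) (x : I -> algC) (X : I -> 'M[rat]_4) :
  (forall i, is_mult_matrix b (x i) (X i)) ->
  is_mult_matrix b (\sum_i x i) (\sum_i X i).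
Proof.
move=> H; elim/big_ind2: _ => // [|*]; [exact: mult_matrix0 | exact: mult_matrixD].
Qed.

Lemma mult_matrix_horner x X (f : {poly rat}) : is_mult_matrix b x X ->
  is_mult_matrix b (pevalC f x) (horner_mx X f).
Proof.
move=> HX; elim/poly_ind: f => [|f c IH].
  by rewrite /pevalC !rmorph0 horner0; exact: mult_matrix0.
rewrite /pevalC rmorphD rmorphM /= map_polyX map_polyC /= hornerMXaddC.
rewrite rmorphD rmorphM /= horner_mx_X horner_mx_C.
by apply: mult_matrixD; [exact: mult_matrixM | exact: mult_matrix_scalar].
Qed.

Hypothesis b_free : rat_free b.

Lemma mult_matrix_unique x X Y :
  is_mult_matrix b x X -> is_mult_matrix b x Y -> X = Y.
Proof.
move=> HX HY; apply/matrixP => k i; apply/eqP; rewrite -subr_eq0; apply/eqP.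
apply: (b_free (c := fun k => X k i - Y k i) _ k).
under eq_bigr => j _ do rewrite rmorphB mulrBl.
by rewrite sumrB -HX -HY subrr.
Qed.

Lemma mult_matrix_comm x y X Y : is_mult_matrix b x X -> is_mult_matrix b y Y ->
  X *m Y = Y *m X.
Proof.
move=> HX HY; apply: (mult_matrix_unique (mult_matrixM HX HY)).
by rewrite mulrC; exact: mult_matrixM.
Qed.

Lemma rat_free_neq0 i : b i != 0.
Proof.
apply/eqP => bi0.
have sum0 : \sum_j ratr ((j == i)%:R : rat) * b j = 0.
  rewrite (bigD1 i) //= big1 ?addr0 ?bi0 ?mulr0 // => j /negbTE ->.
  by rewrite rmorph0 mul0r.
by have /eqP := b_free sum0 i; rewrite eqxx oner_eq0.
Qed.

Lemma mult_matrix_eq0 x X : is_mult_matrix b x X -> (x = 0 <-> X = 0).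
Proof.
move=> HX; split=> [x0 | X0].
  by apply: (mult_matrix_unique HX); rewrite x0; exact: mult_matrix0.
have := HX 0; rewrite X0 big1 => [/eqP | k _]; last by rewrite mxE rmorph0 mul0r.
by rewrite mulf_eq0 (negbTE (rat_free_neq0 0)) orbF => /eqP.
Qed.

End MultMatrix.

Lemma mult_matrix_conj_eq0 b1 b2 x1 x2 X1 (P : 'M[rat]_4) (f : {poly rat}) :
  rat_free b1 -> rat_free b2 -> P \in unitmx ->
  is_mult_matrix b1 x1 X1 -> is_mult_matrix b2 x2 (P *m X1 *m invmx P) ->
  pevalC f x1 = 0 -> pevalC f x2 = 0.
Proof.
move=> b1_free b2_free Pu HX1 HX2.
move/(mult_matrix_eq0 b1_free (mult_matrix_horner f HX1)) => fX1.
apply/(mult_matrix_eq0 b2_free (mult_matrix_horner f HX2)).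
by rewrite horner_mx_uconj // fX1 mulmx0 mul0mx.
Qed.

Lemma pevalC_comp (f g : {poly rat}) x : pevalC (f \Po g) x = pevalC f (pevalC g x).
Proof. by rewrite /pevalC map_comp_poly horner_comp. Qed.

Lemma pevalCM (f g : {poly rat}) x : pevalC (f * g) x = pevalC f x * pevalC g x.
Proof. by rewrite /pevalC rmorphM hornerM. Qed.

Lemma pevalCB (f g : {poly rat}) x : pevalC (f - g) x = pevalC f x - pevalC g x.
Proof. by rewrite /pevalC rmorphB hornerD hornerN. Qed.

Lemma pevalCX x : pevalC 'X x = x.
Proof. by rewrite /pevalC map_polyX hornerX. Qed.

Lemma pevalCC c x : pevalC c%:P x = ratr c.
Proof. by rewrite /pevalC map_polyC hornerC. Qed.

Lemma pevalC_mod (p f : {poly rat}) z :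
  root (map_poly ratr p) z -> pevalC (f %% p) z = pevalC f z.
Proof.
move=> pz; rewrite [in RHS](divp_eq f p) /pevalC rmorphD rmorphM hornerD hornerM.
by rewrite (rootP pz) mulr0 add0r.
Qed.

Lemma pevalC_coef n (f : {poly rat}) x :
  (size f <= n)%N -> pevalC f x = \sum_(k < n) ratr f`_k * x ^+ k.
Proof.
move=> sf; rewrite /pevalC (@horner_coef_wide _ n); last by rewrite size_map_poly.
by apply: eq_bigr => k _; rewrite coef_map.
Qed.

Lemma pevalC_poly n (a : 'I_n.+1 -> rat) x :
  pevalC (\poly_(i < n.+1) a (inord i)) x = \sum_i ratr (a i) * x ^+ i.
Proof.
rewrite (pevalC_coef x (size_poly _ _)).
by apply: eq_bigr => i _; rewrite coef_poly ltn_ord inord_val.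
Qed.

Section IrreduciblePoly.
Variables (p : {poly rat}) (y : algC).
Hypotheses (p_irr : irreducible_poly p) (py : root (map_poly ratr p) y).

Lemma irreducible_dvdp_peval f : pevalC f y = 0 -> p %| f.
Proof.
move=> fy; have [sp Hirr] := p_irr.
have gy : root (map_poly (ratr : {rmorphism rat -> algC}) (gcdp p f)) y.
  by rewrite gcdp_map root_gcd py; apply/eqP.
have sg : size (gcdp p f) != 1%N.
  apply/negP => /size_poly1P [c c0 cE].
  by move: gy; rewrite cE map_polyC rootC fmorph_eq0 (negbTE c0).
by have /eqp_dvdl <- := Hirr _ sg (dvdp_gcdl p f); exact: dvdp_gcdr.
Qed.

Lemma irreducible_peval_eq0 f w :
  pevalC f y = 0 -> root (map_poly ratr p) w -> pevalC f w = 0.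
Proof.
move=> /irreducible_dvdp_peval /dvdpP [k ->] pw.
by rewrite pevalCM /pevalC (rootP pw) mulr0.
Qed.

Lemma irreducible_peval_small f :
  pevalC f y = 0 -> (size f < size p)%N -> f = 0.
Proof.
move=> /irreducible_dvdp_peval pf sf; apply/eqP; apply: contraTT sf => f0.
by rewrite -leqNgt; exact: dvdp_leq.
Qed.

End IrreduciblePoly.

Section Subfield.
Variable F : set algC.
Hypothesis F_subfield : subfieldC F.

Lemma subfieldC0 : F 0.
Proof. by have [F1 FB _ _] := F_subfield; rewrite -(subrr 1); exact: FB. Qed.

Lemma subfieldCN x : F x -> F (- x).
Proof. by have [_ FB _ _] := F_subfield; rewrite -sub0r; apply: FB; exact: subfieldC0. Qed.

Lemma subfieldCD x y : F x -> F y -> F (x + y).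
Proof.
have [_ FB _ _] := F_subfield.
by move=> Fx Fy; rewrite -[y]opprK; apply: FB => //; exact: subfieldCN.
Qed.

Lemma subfieldC_ratr q : F (ratr q).
Proof.
have [F1 _ FM FV] := F_subfield.
have Fn n : F n%:R.
  by elim: n => [|n IH]; [exact: subfieldC0 | rewrite mulrS; exact: subfieldCD].
have Fz (z : int) : F z%:~R.
  by case: z => n; [exact: Fn | rewrite NegzE mulrNz; apply: subfieldCN; exact: Fn].
rewrite -(divq_num_den q) fmorph_div !rmorph_int.
by apply: FM => //; exact: FV.
Qed.

Lemma subfieldC_peval f x : F x -> F (pevalC f x).
Proof.
have [_ _ FM _] := F_subfield.
move=> Fx; elim/poly_ind: f => [|f c IH].
  by rewrite /pevalC rmorph0 horner0; exact: subfieldC0.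
rewrite /pevalC rmorphD rmorphM /= map_polyX map_polyC /= hornerMXaddC.
by apply: subfieldCD; [exact: FM | exact: subfieldC_ratr].
Qed.

End Subfield.

Lemma splitting_fieldC_sub (p1 p2 g h : {poly rat}) y z :
  irreducible_poly p1 -> root (map_poly ratr p1) y -> root (map_poly ratr p2) z ->
  y = pevalC g z -> z = pevalC h y ->
  splitting_fieldC p1 `<=` splitting_fieldC p2.
Proof.
move=> p1_irr p1y p2z yE zE x x_split F F_subfield F_roots.
apply: x_split => // w p1w.
have p2hw : root (map_poly ratr p2) (pevalC h w).
  apply/rootP; rewrite -[_.[_]]/(pevalC p2 _) -pevalC_comp.
  apply: (irreducible_peval_eq0 p1_irr p1y) p1w.
  by rewrite pevalC_comp -zE; exact/rootP.
have -> : w = pevalC g (pevalC h w).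
  apply/eqP; rewrite eq_sym -subr_eq0 -[X in _ - X](pevalCX w) -pevalC_comp -pevalCB.
  apply/eqP; apply: (irreducible_peval_eq0 p1_irr p1y) p1w.
  by rewrite pevalCB pevalC_comp pevalCX -zE -yE subrr.
by apply: subfieldC_peval => //; exact: F_roots.
Qed.

Lemma splitting_fieldC_eq (p1 p2 g h : {poly rat}) y z :
  irreducible_poly p1 -> irreducible_poly p2 ->
  root (map_poly ratr p1) y -> root (map_poly ratr p2) z ->
  y = pevalC g z -> z = pevalC h y ->
  splitting_fieldC p1 = splitting_fieldC p2.
Proof.
move=> p1_irr p2_irr p1y p2z yE zE; apply/seteqP; split.
  exact: (splitting_fieldC_sub p1_irr p1y p2z yE zE).
exact: (splitting_fieldC_sub p2_irr p2z p1y zE yE).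
Qed.

Lemma peval_root_inverse n (p1 p2 g : {poly rat}) z :
  irreducible_poly p1 -> size p1 = n.+2 -> size p2 = n.+2 ->
  root (map_poly ratr p2) z -> root (map_poly ratr p1) (pevalC g z) ->
  exists h, z = pevalC h (pevalC g z).
Proof.
move=> p1_irr sp1 sp2 p2z p1y; set y := pevalC g z in p1y *.
have coordE f : pevalC f z = \sum_(k < n.+1) ratr (f %% p2)`_k * z ^+ k.
  rewrite -(pevalC_mod f p2z); apply: pevalC_coef.
  by rewrite -ltnS -sp2 ltn_modp -size_poly_gt0 sp2.
have yX i : y ^+ i = pevalC (g ^+ i) z by rewrite /y /pevalC rmorphXn horner_exp.
(* Row i of C holds the coordinates of y ^+ i in the basis (z ^+ k)_k; it is
   invertible because p1, of degree n + 1, is the minimal polynomial of y. *)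
pose C : 'M[rat]_n.+1 := \matrix_(i, k) ((g ^+ i) %% p2)`_k.
have combE (a : 'rV_n.+1) :
    \sum_i ratr (a 0 i) * y ^+ i = \sum_k ratr ((a *m C) 0 k) * z ^+ k.
  under eq_bigr => i _ do rewrite yX coordE mulr_sumr.
  rewrite exchange_big /=; apply: eq_bigr => k _.
  rewrite !mxE rmorph_sum mulr_suml; apply: eq_bigr => i _.
  by rewrite mxE rmorphM mulrA.
have C_unit : C \in unitmx.
  apply: contraT; rewrite unitmxE unitfE negbK => /det0P [a a_neq0 aC0].
  suff a0 : \poly_(i < n.+1) a 0 (inord i) = 0.
    case/negP: a_neq0; apply/eqP/rowP => i.
    have := congr1 (fun f : {poly rat} => f`_i) a0.
    by rewrite coef_poly ltn_ord inord_val coef0 mxE.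
  apply: (irreducible_peval_small p1_irr p1y); last by rewrite sp1 ltnS size_poly.
  rewrite pevalC_poly combE aC0 big1 // => k _.
  by rewrite mxE rmorph0 mul0r.
pose v : 'rV_n.+1 := \row_k ('X %% p2)`_k.
exists (\poly_(i < n.+1) (v *m invmx C) 0 (inord i)).
rewrite pevalC_poly combE mulmxKV // -[LHS]pevalCX coordE.
by apply: eq_bigr => k _; rewrite mxE.
Qed.

Lemma unitmx_near_one (R : realType) n (A : 'M[R]_n) : exists2 s0 : rat, 0 < s0 &
  forall r : R, 0 <= r <= ratr s0 -> (1%:M + r *: A) \in unitmx.
Proof.
pose q : {poly R} := \det (1%:M + 'X *: map_mx polyC A).
have qE r : q.[r] = \det (1%:M + r *: A).
  rewrite /q -horner_evalE -det_map_mx; congr (\det _); apply/matrixP => i j.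
  rewrite !mxE /=; change (((i == j)%:R + 'X * (A i j)%:P).[r] = (i == j)%:R + r * A i j).
  by rewrite !hornerE; case: (i == j); rewrite ?mulr1n ?mulr0n ?hornerC.
have : \forall r \near (0 : R), q.[r] != 0.
  apply: (@cvgr_neq0 R R^o R (nbhs (0 : R)) _ (horner q) q.[0]).
    exact: continuous_horner.
  by rewrite qE scale0r addr0 det1 oner_neq0.
case/nbhs_ballP => e e_gt0 qe.
exists (((Num.truncn e^-1).+1)%:R^-1); first by rewrite invr_gt0 ltr0n.
move=> r /andP [r_ge0 r_le].
rewrite unitmxE unitfE -qE; apply: qe.
rewrite /ball /= sub0r normrN ger0_norm //; apply: (le_lt_trans r_le).
rewrite fmorphV rmorph_nat -[X in _ < X]invrK ltf_pV2 ?posrE ?ltr0n ?invr_gt0 //.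
exact: truncnS_gt.
Qed.

Section IdentityComponent.
Variables (R : realType) (M : 'I_4 -> 'M[rat]_4).

Lemma Tid_unit X : Tid R M X -> X \in unitmx.
Proof. by move/connected_component_sub => []. Qed.

Lemma Ttilde_comm X Y : (forall j k, M j *m M k = M k *m M j) ->
  Ttilde R M X -> Ttilde R M Y -> X *m Y = Y *m X.
Proof.
move=> M_comm [[c ->] _] [[d ->] _].
rewrite mulmx_suml mulmx_sumr; apply: eq_bigr => j _.
rewrite -scalemxAl -scalemxAr mulmx_sumr mulmx_suml; congr (_ *: _).
apply: eq_bigr => k _.
by rewrite -scalemxAr -scalemxAl /mxR -!map_mxM M_comm.
Qed.

Lemma Tid_path (f : R -> 'M[R]_4) (a b s0 s1 : R) :
  continuous f -> a <= s0 <= b -> a <= s1 <= b -> f s0 = 1%:M ->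
  (forall s, a <= s <= b -> Ttilde R M (f s)) -> Tid R M (f s1).
Proof.
move=> f_cont s0_ab s1_ab f_s0 f_T.
exists (f @` [set` `[a, b]]); last by exists s1 => //=; rewrite in_itv /=.
split.
- by exists s0 => //=; rewrite in_itv /=.
- by move=> _ [s /= s_ab <-]; apply: f_T; move: s_ab; rewrite in_itv.
- apply: connected_continuous_connected; last exact: continuous_subspaceT.
  by apply/connected_intervalP; exact: interval_is_interval.
Qed.

Hypothesis M0 : M 0 = 1%:M.

Lemma Ttilde_pencil (a r : R) : (a *: 1%:M + r *: mxR R (M 1)) \in unitmx ->
  Ttilde R M (a *: 1%:M + r *: mxR R (M 1)).
Proof.
split=> //; exists (fun k : 'I_4 => if k == 0 then a else if k == 1 then r else 0).
rewrite (bigD1 0) //= (bigD1 1) //= big1 ?addr0; first by rewrite /mxR M0 map_mx1.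
by move=> k /andP [/negbTE -> /negbTE ->]; rewrite scale0r.
Qed.

Lemma Tid_scalar (s : R) : 0 < s -> Tid R M s%:M.
Proof.
move=> s_gt0; rewrite -scalemx1.
apply: (@Tid_path (fun r => r *: 1%:M) (Num.min 1 s) (Num.max 1 s) 1).
- by move=> x; apply: cvgZ; [exact: cvg_id | exact: cvg_cst].
- by rewrite ge_min le_max lexx.
- by rewrite ge_min le_max lexx !orbT.
- exact: scale1r.
move=> r /andP [r_ge r_le].
have r_gt0 : 0 < r by apply: lt_le_trans r_ge; rewrite lt_min ltr01.
rewrite -[r *: 1%:M]addr0 -(scale0r (mxR R (M 1))); apply: Ttilde_pencil.
by rewrite scale0r addr0 unitmxZ ?unitmx1 // unitfE gt_eqF.
Qed.

Lemma Tid_one_plus : exists2 s0 : rat, 0 < s0 & Tid R M (mxR R (1%:M + s0 *: M 1)).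
Proof.
have [s0 s0_gt0 s0_unit] := unitmx_near_one (mxR R (M 1)).
exists s0 => //.
have -> : mxR R (1%:M + s0 *: M 1) = 1 *: 1%:M + ratr s0 *: mxR R (M 1).
  by rewrite /mxR map_mxD map_mxZ map_mx1 scale1r.
apply: (@Tid_path (fun r => 1 *: 1%:M + r *: mxR R (M 1)) 0 (ratr s0) 0).
- by move=> x; apply: cvgD; [exact: cvg_cst | apply: cvgZ; [exact: cvg_id | exact: cvg_cst]].
- by rewrite lexx ler0q ltW.
- by rewrite lexx ler0q ltW.
- by rewrite scale0r addr0 scale1r.
by move=> r r_in; apply: Ttilde_pencil; rewrite scale1r; exact: s0_unit.
Qed.

End IdentityComponent.

Section TranslationPart.
Variables (R : realType) (T1 T2 : set 'M[R]_4) (Phi : sdp R -> sdp R).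
Let G1 : set (sdp R) := [set g | T1 g.1].
Hypotheses (T1_scalar : forall s : R, 0 < s -> T1 s%:M)
  (T2_unit : forall X, T2 X -> X \in unitmx)
  (T2_comm : forall X Y, T2 X -> T2 Y -> X *m Y = Y *m X)
  (Phi_T2 : forall g, G1 g -> T2 (Phi g).1)
  (Phi_mul : forall g h, G1 g -> G1 h -> Phi (sdmul R g h) = sdmul R (Phi g) (Phi h))
  (Phi_inj : forall g h, G1 g -> G1 h -> Phi g = Phi h -> g = h).

Let G1_transl x : G1 (1%:M, x). Proof. exact: T1_scalar ltr01. Qed.

Lemma Phi_sdone : Phi (sdone R) = sdone R.
Proof.
have := Phi_mul (G1_transl 0) (G1_transl 0).
rewrite [sdmul _ _ _]/sdmul /= mul1mx mulmx0 addr0 -/(sdone R).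
case E : (Phi (sdone R)) => [X v] [XX vv].
have X_unit : X \in unitmx by have := Phi_T2 (G1_transl 0); rewrite E; exact: T2_unit.
have X1 : X = 1%:M by apply: (can_inj (mulKmx X_unit)); rewrite -XX mulmx1.
rewrite X1 mul1mx in vv; congr (_, _) => //.
by apply: (@addrI _ v); rewrite addr0 -vv.
Qed.

Lemma Phi_fst_inv g g' : G1 g -> G1 g' -> sdmul R g g' = sdone R ->
  (Phi g).1 *m (Phi g').1 = 1%:M.
Proof.
by move=> Gg Gg' gg'; have := Phi_mul Gg Gg'; rewrite gg' Phi_sdone => /(congr1 fst).
Qed.

Definition transl_map x := (Phi (1%:M, x)).2.

(* (1, x) is the commutator of (2, 0) and (1, x), and T2 is abelian. *)
Lemma Phi_transl x : Phi (1%:M, x) = (1%:M, transl_map x).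
Proof.
suff Phi_x1 : (Phi (1%:M, x)).1 = 1%:M.
  by rewrite /transl_map; case: (Phi (1%:M, x)) Phi_x1 => a v /= ->.
have two_neq0 : (2 : R) != 0 by rewrite pnatr_eq0.
pose g : sdp R := (2%:M, 0); pose g' : sdp R := (2^-1%:M, 0).
pose h : sdp R := (1%:M, x); pose h' : sdp R := (1%:M, - x).
have Gg : G1 g by apply: T1_scalar; rewrite ltr0n.
have Gg' : G1 g' by apply: T1_scalar; rewrite invr_gt0 ltr0n.
have gg' : sdmul R g g' = sdone R.
  by rewrite /sdmul /sdone /= -scalar_mxM mulfV // mulmx0 addr0.
have hh' : sdmul R h h' = sdone R by rewrite /sdmul /sdone /= mul1mx mul1mx subrr.
have commE : sdmul R (sdmul R (sdmul R g h) g') h' = (1%:M, x).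
  rewrite /sdmul /= !mulmx1 mulmx0 addr0 add0r -scalar_mxM mulfV // mul1mx.
  by rewrite mul_scalar_mx scaler_nat mulr2n addrK.
have Ggh : G1 (sdmul R g h) by rewrite /G1 /= mulmx1.
have Gghg' : G1 (sdmul R (sdmul R g h) g').
  by rewrite /G1 /= mulmx1 -scalar_mxM mulfV //; exact: (G1_transl 0).
have Gh : G1 h := G1_transl x; have Gh' : G1 h' := G1_transl (- x).
rewrite -commE !Phi_mul //.
have := Phi_fst_inv Gg Gg' gg'; have := Phi_fst_inv Gh Gh' hh'.
have := Phi_T2 Gh; have := Phi_T2 Gg'.
case: (Phi g) => [a c]; case: (Phi h) => [b d].
case: (Phi g') => [a' c']; case: (Phi h') => [b' d'] /= T2a' T2b bb' aa'.
by rewrite -(mulmxA a) (T2_comm T2b T2a') mulmxA aa' mul1mx bb'.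
Qed.

Lemma transl_map_is_zmod_morphism : zmod_morphism transl_map.
Proof.
move=> x y; have := Phi_mul (G1_transl (x - y)) (G1_transl y).
by rewrite /sdmul /= !mul1mx !Phi_transl /= !mul1mx subrK => -[->]; rewrite addrK.
Qed.

Lemma transl_map_inj x : transl_map x = 0 -> x = 0.
Proof.
move=> Lx0; have : Phi (1%:M, x) = Phi (sdone R) by rewrite Phi_sdone Phi_transl Lx0.
by move/Phi_inj => /(_ (G1_transl x) (G1_transl 0)) [].
Qed.

Lemma transl_map_conj g x : G1 g -> transl_map (g.1 *m x) = (Phi g).1 *m transl_map x.
Proof.
move=> Gg; have gx : sdmul R g (1%:M, x) = sdmul R (1%:M, g.1 *m x) g.
  by rewrite /sdmul /= mulmx1 mul1mx mul1mx addrC.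
move: (congr1 Phi gx); rewrite !Phi_mul ?G1_transl // !Phi_transl /sdmul /=.
rewrite mulmx1 !mul1mx => -[]; rewrite [X in X = _]addrC => E.
by apply: (addIr (Phi g).2); rewrite E.
Qed.

End TranslationPart.

Lemma sdmul_same_coset (R : realType) (x h h' : sdp R) (a a' : 'cV[R]_4) :
  x.1 \in unitmx -> (1%:M, a) = sdmul R x h -> (1%:M, a') = sdmul R x h' ->
  sdmul R (sdinv R h) h' = (1%:M, a' - a).
Proof.
case: x h h' => [X y] [H z] [H' z'] /= X_unit [XH a_E] [XH' a'_E].
have H_E : H = invmx X by rewrite -[H]mul1mx -(mulVmx X_unit) -mulmxA -XH mulmx1.
have H'_E : H' = invmx X by rewrite -[H']mul1mx -(mulVmx X_unit) -mulmxA -XH' mulmx1.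
rewrite /sdmul /sdinv /= H_E H'_E invmxK mulmxV // a_E a'_E.
by rewrite opprD addrACA subrr add0r addrC.
Qed.

Lemma finite_index_transl (R : realType) (Gam Gam' : set (sdp R)) (v : 'cV[R]_4) :
  is_subgroup R Gam Gam' -> finite_index R Gam Gam' ->
  (forall w, int_vec R w -> Gam (1%:M, w)) -> (forall g, Gam g -> g.1 \in unitmx) ->
  int_vec R v -> exists2 d : int, d != 0 & Gam' (1%:M, d%:~R *: v).
Proof.
move=> [_ _ Gam'_mul Gam'_inv] [n [x [x_Gam cover]]] Gam_transl Gam_unit v_int.
pose kv (k : 'I_n.+1) : sdp R := (1%:M, (k : nat)%:R *: v).
have kv_Gam k : Gam (kv k).
  apply: Gam_transl => i; have [z zE] := v_int i.
  by exists ((k : nat)%:Z * z); rewrite /kv mxE zE intrM -pmulrn.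
have /fin_all_exists [coset cosetP] :
    forall k, exists i, exists2 h, Gam' h & kv k = sdmul R (x i) h.
  by move=> k; exact: cover.
have /injectivePn [k [k' k_neq_k' same_coset]] : ~~ injectiveb coset.
  by apply/injectiveP => /leq_card; rewrite !card_ord ltnn.
have [h h_Gam' hE] := cosetP k; have [h' h'_Gam' h'E] := cosetP k'.
rewrite -same_coset in h'E.
exists ((k' : nat)%:Z - (k : nat)%:Z).
  by rewrite subr_eq0 eq_sym; apply: contra k_neq_k' => /eqP [] /val_inj ->.
rewrite intrB -!pmulrn scalerBl -(sdmul_same_coset _ hE h'E); last exact/Gam_unit/x_Gam.
by apply: Gam'_mul => //; exact: Gam'_inv.
Qed.

Lemma raddfZ_ratr (K : numFieldType) (U V : lmodType K) (f : {additive U -> V}) q x :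
  f (ratr q *: x) = ratr q *: f x.
Proof.
have d_neq0 : ((denq q)%:~R : K) != 0 by rewrite intr_eq0 denq_neq0.
have dq : ((denq q)%:~R : K) * ratr q = (numq q)%:~R.
  by rewrite -{2}(divq_num_den q) fmorph_div !rmorph_int mulrC divfK.
apply: (scalerI d_neq0); rewrite [RHS]scalerA dq !scaler_int -!(raddfMz f).
by rewrite -[in LHS]scaler_int -[in RHS]scaler_int scalerA dq.
Qed.

Lemma rat_linear_mx (R : realType) (L : 'cV[R]_4 -> 'cV[R]_4) : zmod_morphism L ->
  (forall j : 'I_4, exists2 d : int, d != 0 & int_vec R (L (d%:~R *: delta_mx j 0))) ->
  exists P : 'M[rat]_4, forall v : 'cV[rat]_4, L (map_mx ratr v) = mxR R P *m map_mx ratr v.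
Proof.
move=> L_is_zmod L_int.
pose L' : {additive 'cV[R]_4 -> 'cV[R]_4} :=
  HB.pack L (GRing.isZmodMorphism.Build _ _ L L_is_zmod).
rewrite -[L]/(L' : _ -> _) in L_int *.
have L_delta j i : exists q : rat, L (delta_mx j 0) i 0 = ratr q.
  have [d d_neq0 dL_int] := L_int j; have [z zE] := dL_int i.
  exists (z%:~R / d%:~R); rewrite fmorph_div !rmorph_int -zE.
  by rewrite scaler_int raddfMz -scaler_int mxE mulrC mulKf ?intr_eq0.
have /fin_all_exists [Q QE] :
    forall j, exists Q : 'I_4 -> rat, forall i, L (delta_mx j 0) i 0 = ratr (Q i).
  by move=> j; exact: fin_all_exists (L_delta j).
exists (\matrix_(i, j) Q j i) => v.
have vE : map_mx ratr v = \sum_j ratr (v j 0) *: (delta_mx j 0 : 'cV[R]_4).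
  apply/matrixP => i k; rewrite (ord1 k) summxE !mxE (bigD1 i) //= big1 ?addr0.
    by rewrite !mxE !eqxx mulr1.
  by move=> j ji; rewrite !mxE eq_sym (negbTE ji) mulr0.
rewrite vE raddf_sum -vE; apply/matrixP => i k; rewrite (ord1 k) summxE !mxE.
by apply: eq_bigr => j _; rewrite !mxE raddfZ_ratr mxE QE mulrC.
Qed.

Lemma rat_in_span (R : realType) (M : 'I_4 -> 'M[rat]_4) (Z : 'M[rat]_4) (c : 'I_4 -> R) :
  mxR R Z = \sum_k c k *: mxR R (M k) -> exists c' : 'I_4 -> rat, Z = \sum_k c' k *: M k.
Proof.
move=> ZE; pose B : 'M[rat]_(4, 4 * 4) := \matrix_k mxvec (M k).
have /submxP [D DE] : (mxvec Z <= B)%MS.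
  rewrite -(map_submx (ratr : {rmorphism rat -> R})); apply/submxP; exists (\row_k c k).
  rewrite map_mxvec -/(mxR R Z) ZE mulmx_sum_row linear_sum; apply: eq_bigr => k _.
  by rewrite linearZ /= mxE -map_row rowK map_mxvec.
exists (D 0); apply: (can_inj mxvecK); rewrite DE mulmx_sum_row linear_sum.
by apply: eq_bigr => k _; rewrite linearZ /= rowK.
Qed.

Lemma int_vec_delta (R : realType) (j : 'I_4) : int_vec R (delta_mx j 0).
Proof. by move=> i; exists (i == j)%:R; rewrite mxE eqxx andbT; case: (i == j). Qed.

Section Commensurable.
Variables (R : realType) (M1 M2 : 'I_4 -> 'M[rat]_4) (A1 A2 : 'I_3 -> 'M[rat]_4).
Variables (Gam1' Gam2' : set (sdp R)) (Phi : sdp R -> sdp R).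
Hypotheses (M1_0 : M1 0 = 1%:M) (M2_comm : forall j k, M2 j *m M2 k = M2 k *m M2 j).
Hypotheses (Gam1'_sub : is_subgroup R (Gamma R M1 A1) Gam1')
  (Gam1'_fin : finite_index R (Gamma R M1 A1) Gam1')
  (Gam2'_sub : is_subgroup R (Gamma R M2 A2) Gam2').
Hypotheses (Phi_G : forall g, GT R M1 g -> GT R M2 (Phi g))
  (Phi_mul : forall g h, GT R M1 g -> GT R M1 h -> Phi (sdmul R g h) = sdmul R (Phi g) (Phi h))
  (Phi_inj : forall g h, GT R M1 g -> GT R M1 h -> Phi g = Phi h -> g = h)
  (Phi_Gam : Phi @` Gam1' = Gam2').

Let T1_scalar : forall s : R, 0 < s -> Tid R M1 s%:M := Tid_scalar M1_0.
Let T2_unit : forall X, Tid R M2 X -> X \in unitmx := @Tid_unit R M2.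

Let T2_comm X Y : Tid R M2 X -> Tid R M2 Y -> X *m Y = Y *m X.
Proof.
by move=> /connected_component_sub T2X /connected_component_sub T2Y; exact: Ttilde_comm.
Qed.

Lemma Gamma_transl v : int_vec R v -> Gamma R M1 A1 (1%:M, v).
Proof. by move=> v_int; split=> //; split; [exact: T1_scalar ltr01 | move=> H []]. Qed.

Let Gamma_unit g : Gamma R M1 A1 g -> g.1 \in unitmx.
Proof. by case=> [[/Tid_unit]]. Qed.

Lemma transl_map_int v : int_vec R v ->
  exists2 d : int, d != 0 & int_vec R (transl_map Phi (d%:~R *: v)).
Proof.
move=> v_int; have [d d_neq0 dv_Gam1'] :=
  finite_index_transl Gam1'_sub Gam1'_fin Gamma_transl Gamma_unit v_int.
exists d => //.
have : Gam2' (Phi (1%:M, d%:~R *: v)) by rewrite -Phi_Gam; exists (1%:M, d%:~R *: v).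
have [Gam2'_Gam _ _ _] := Gam2'_sub.
by move=> /Gam2'_Gam [_]; rewrite (Phi_transl T1_scalar T2_unit T2_comm Phi_G Phi_mul).
Qed.

Lemma transl_map_mx : exists2 P : 'M[rat]_4, P \in unitmx &
  forall v : 'cV[rat]_4, transl_map Phi (map_mx ratr v) = mxR R P *m map_mx ratr v.
Proof.
have L_zmod := transl_map_is_zmod_morphism T1_scalar T2_unit T2_comm Phi_G Phi_mul.
have [P PE] := rat_linear_mx L_zmod (fun j => transl_map_int (int_vec_delta R j)).
exists P => //; apply: contraT; rewrite unitmxE unitfE negbK -det_tr => /det0P [w w_neq0 wP].
suff /(congr1 trmx) : w^T = 0 by rewrite trmxK trmx0 => w0; rewrite w0 eqxx in w_neq0.
apply: (@map_mx_inj _ _ (ratr : {rmorphism rat -> R})); rewrite map_mx0.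
apply: (transl_map_inj T1_scalar T2_unit T2_comm Phi_G Phi_mul Phi_inj).
by rewrite PE /mxR -map_mxM -[P]trmxK -trmx_mul wP trmx0 map_mx0.
Qed.

Lemma Phi_fst_conj : exists2 P : 'M[rat]_4, P \in unitmx &
  forall X, Tid R M1 (mxR R X) -> (Phi (mxR R X, 0)).1 = mxR R (P *m X *m invmx P).
Proof.
have [P P_unit PE] := transl_map_mx; exists P => // X T1X.
have gG : GT R M1 (mxR R X, 0) := T1X.
have aP : (Phi (mxR R X, 0)).1 *m mxR R P = mxR R (P *m X).
  apply/matrixP => i j.
  have := transl_map_conj T1_scalar T2_unit T2_comm Phi_G Phi_mul
    (map_mx ratr (delta_mx j 0)) gG.
  rewrite /= -map_mxM !PE [RHS]mulmxA -map_mxM mulmxA map_mxM map_delta_mx -!colE.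
  by move/(congr1 (fun v : 'cV[R]_4 => v i 0)); rewrite !mxE => <-.
have P_unitR : mxR R P \in unitmx by rewrite map_unitmx.
by rewrite -[LHS](mulmxK P_unitR) aP /mxR !map_mxM map_invmx.
Qed.

End Commensurable.

Lemma commensurable_conj_span (R : realType) (M1 M2 : 'I_4 -> 'M[rat]_4)
    (A1 A2 : 'I_3 -> 'M[rat]_4) :
  M1 0 = 1%:M -> (forall j k, M2 j *m M2 k = M2 k *m M2 j) ->
  commensurable R (GT R M1) (Gamma R M1 A1) (GT R M2) (Gamma R M2 A2) ->
  exists2 P : 'M[rat]_4, P \in unitmx & forall X, Tid R M1 (mxR R X) ->
    exists c : 'I_4 -> rat, P *m X *m invmx P = \sum_k c k *: M2 k.
Proof.
move=> M1_0 M2_comm [Gam1' [Gam2' [Phi [[sub1 fin1] sub2 _ Phi_iso Phi_Gam]]]].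
have [Phi_G Phi_mul _ [Psi [_ Psi_Phi _ _]]] := Phi_iso.
have Phi_inj g h : GT R M1 g -> GT R M1 h -> Phi g = Phi h -> g = h.
  by move=> Gg Gh gh; rewrite -(Psi_Phi g Gg) gh Psi_Phi.
have [P P_unit PE] := Phi_fst_conj M1_0 M2_comm sub1 fin1 sub2 Phi_G Phi_mul Phi_inj Phi_Gam.
exists P => // X T1X; have [[c cE] _] := connected_component_sub (Phi_G (mxR R X, 0) T1X).
by apply: (rat_in_span (c := c)); rewrite -PE.
Qed.

Unset Implicit Arguments.

Theorem lemma3p2 (R : realType)
  (p1 p2 : {poly rat}) (u1 u2 : algC) (b1 b2 : 'I_4 -> algC)
  (M1 M2 : 'I_4 -> 'M[rat]_4) (e1 e2 : 'I_3 -> algC) (A1 A2 : 'I_3 -> 'M[rat]_4) :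
  field_data p1 u1 b1 M1 e1 A1 ->
  field_data p2 u2 b2 M2 e2 A2 ->
  commensurable R (GT R M1) (Gamma R M1 A1) (GT R M2) (Gamma R M2 A2) ->
  fields_isomorphic (splitting_fieldC p1) (splitting_fieldC p2).
Proof.
move=> [[tr1 b1_Z] M1_mult _ _ _] [[tr2 b2_Z] M2_mult _ _ _] comm.
have [_ p1_irr p1_size p1_u1 _] := tr1; have [_ p2_irr p2_size p2_u2 _] := tr2.
have b1_free := Zbasis_rat_free b1_Z; have b2_free := Zbasis_rat_free b2_Z.
have M1_0 : M1 0 = 1%:M.
  by apply: (mult_matrix_unique b1_free (M1_mult 0)); rewrite expr0; exact: mult_matrix1.
have M2_comm j k := mult_matrix_comm b2_free (M2_mult j) (M2_mult k).
have [P P_unit P_conj] := commensurable_conj_span M1_0 M2_comm comm.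
(* m(u1) need not lie in T1, but m(1 + s0 u1) does for small s0 > 0. *)
have [s0 s0_gt0 T1_s0] := Tid_one_plus R M1_0.
have [c cE] := P_conj _ T1_s0.
pose w := \poly_(k < 4) c (inord k).
have x1_mult : is_mult_matrix b1 (1 + ratr s0 * u1) (1%:M + s0 *: M1 1).
  apply: mult_matrixD; first exact: mult_matrix1.
  by apply: mult_matrixZ; have := M1_mult 1; rewrite expr1.
have x2_mult : is_mult_matrix b2 (pevalC w u2) (P *m (1%:M + s0 *: M1 1) *m invmx P).
  by rewrite cE pevalC_poly; apply: mult_matrix_sum => k; exact: mult_matrixZ.
pose r : {poly rat} := (s0^-1)%:P * ('X - 1%:P).
have r_x1 : pevalC r (1 + ratr s0 * u1) = u1.
  rewrite pevalCM pevalCB pevalCX !pevalCC rmorph1 [1 + _]addrC addrK mulrA.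
  by rewrite -rmorphM mulVf ?gt_eqF // rmorph1 mul1r.
have p1_y : root (map_poly ratr p1) (pevalC (r \Po w) u2).
  apply/rootP; rewrite -[_.[_]]/(pevalC p1 _) !pevalC_comp -pevalC_comp.
  apply: (mult_matrix_conj_eq0 b1_free b2_free P_unit x1_mult x2_mult).
  by rewrite pevalC_comp r_x1; exact/rootP.
have [h hE] := peval_root_inverse p1_irr p1_size p2_size p2_u2 p1_y.
exists id; rewrite (splitting_fieldC_eq p1_irr p2_irr p1_y p2_u2 erefl hE).
by split=> // y Fy; exists y.
Qed.
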